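(* Let $n\ge 4$ be even and let $\ell\ge 3$ be odd with $\gcd(n-1,\ell)\ne 1$. Then $\max(n,\ell)=\binom{n}{2}-\left(\frac{n}{2}+1\right)$, and the graph $\overline{C_3\cup\left(\frac{n-4}{2}\right)P_2\cup K_1}$ is an $(n,\ell)$-extremal graph.
   Context: All graphs are finite and simple; $\overline{G}$ is the complement of $G$, $G\cup H$ is disjoint union, $kH$ is $k$ disjoint copies of $H$, $P_k$ is the path on $k$ vertices, $C_3$ the triangle. Vertex labels lie in $\mathbb{Z}_\ell$. In the neighborhood Lights Out game on $G$, toggling a vertex $v$ adds $1$ (mod $\ell$) to the label of each vertex of the closed neighborhood $N[v]$; the game is won when all labels are $0$. $G$ is $N$-AW if the game can be won from every initial labeling. $\max(n,\ell)$ is the maximum number of edges of an $N$-AW graph on $n$ vertices, and an $(n,\ell)$-extremal graph is an $N$-AW graph on $n$ vertices with $\max(n,\ell)$ edges. *)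

From mathcomp Require Import all_boot.
Set Implicit Arguments. Unset Strict Implicit. Unset Printing Implicit Defensive.

Definition simple_graph (n : nat) (e : rel 'I_n) : Prop :=
  symmetric e /\ irreflexive e.

Definition num_edges (n : nat) (e : rel 'I_n) : nat :=
  #|[set p : 'I_n * 'I_n | (p.1 < p.2)%N && e p.1 p.2]|.

(* Neighborhood Lights Out over Z_l: labels b, toggle counts x (toggling u
   x u times); vertex v receives one unit from each toggle of u with v in N[u]. *)
Definition N_AW (n l : nat) (e : rel 'I_n) : Prop :=
  forall b : 'I_n -> nat, exists x : 'I_n -> nat,
    forall v : 'I_n, (b v + \sum_(u : 'I_n | (u == v) || e u v) x u) %% l = 0.

Definition is_max_NAW (n l m : nat) : Prop :=
  (exists e : rel 'I_n, [/\ simple_graph e, N_AW l e & num_edges e = m]) /\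
  (forall e : rel 'I_n, simple_graph e -> N_AW l e -> num_edges e <= m).

Definition extremal (n l : nat) (e : rel 'I_n) : Prop :=
  [/\ simple_graph e, N_AW l e &
      forall e' : rel 'I_n, simple_graph e' -> N_AW l e' ->
        num_edges e' <= num_edges e].

(* The graph C_3 u ((n-4)/2) P_2 u K_1 on 'I_n (n even): triangle on {0,1,2},
   edges {3,4},{5,6},...,{n-3,n-2}, and n-1 isolated. *)
Definition H_graph (n : nat) : rel 'I_n := fun u v =>
  (u != v) &&
  (((u < 3) && (v < 3)) ||
   [&& 3 <= u, 3 <= v, u < n.-1, v < n.-1 & (u.-1)./2 == (v.-1)./2]).

Definition G_graph (n : nat) : rel 'I_n := fun u v =>
  (u != v) && ~~ H_graph u v.

From mathcomp Require Import all_boot all_algebra zify ring.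
Set Implicit Arguments. Unset Strict Implicit. Unset Printing Implicit Defensive.

(* Let F be the complement of an N-AW graph. Two distinct vertices
   with the same F-neighbourhood have the same closed neighbourhood in the
   graph, and the labeling that is 1 on one of them and 0 elsewhere cannot be
   cleared. If F is a perfect matching, every closed neighbourhood has n - 1
   vertices, and summing the equations for the all-ones labeling gives
   gcd(n - 1, l) | n, hence gcd(n - 1, l) = 1. On an even number n of vertices,
   a graph with at most n/2 edges is a perfect matching or has such twins: count
   isolated vertices against the excess of degrees over 1, and use that the
   degree sum is even. So F has more than n/2 edges. The complement of C_3 u ((n-4)/2) P_2 u K_1 has exactly
   n/2 + 1 non-edges, and its Lights Out system is solved explicitly over Z_l;
   on the triangle this requires inverting 2, which is possible as l is odd. *)

Lemma sum_nat_pos_pred (T : finType) (f : T -> nat) :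
  \sum_x f x = #|[pred x | 0 < f x]| + \sum_x (f x).-1.
Proof.
rewrite -sum1_card [in RHS]big_mkcond -big_split /=.
by apply: eq_bigr => x _; rewrite inE; case: (f x).
Qed.

Section GraphCounting.

Variable n : nat.
Implicit Types (e : rel 'I_n) (u v : 'I_n).

Definition compl e : rel 'I_n := fun u v => (u != v) && ~~ e u v.

Definition deg e v : nat := #|[pred u | e u v]|.

Lemma compl_simple e : simple_graph e -> simple_graph (compl e).
Proof.
case=> e_sym _; split=> [u v | u]; last by rewrite /compl eqxx.
by rewrite /compl eq_sym e_sym.
Qed.

Lemma closed_nbhdE e u v : ((u == v) || e u v) = ~~ compl e u v.
Proof. by rewrite /compl; case: (u == v); case: (e u v). Qed.

Lemma card_closed_nbhd e v :
  #|[pred u | (u == v) || e u v]| + deg (compl e) v = n.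
Proof.
rewrite -[RHS](card_ord n) -(cardC [pred u | compl e u v]) addnC /deg.
by congr (_ + _); apply: eq_card => u; rewrite !inE closed_nbhdE.
Qed.

Lemma card_rel (P : rel 'I_n) :
  #|[set p : 'I_n * 'I_n | P p.1 p.2]| = \sum_u \sum_v (P u v : nat).
Proof.
rewrite -sum1_card big_mkcond pair_big /=; apply: eq_bigr => p _.
by rewrite inE; case: (P _ _).
Qed.

Lemma deg_sum e v : deg e v = \sum_u (e u v : nat).
Proof. by rewrite /deg -sum1_card big_mkcond; apply: eq_bigr => u _; rewrite inE. Qed.

Lemma handshake e : simple_graph e -> \sum_v deg e v = 2 * num_edges e.
Proof.
case=> e_sym e_irr; rewrite /num_edges (card_rel (fun u v => (u < v) && e u v)) mul2n -addnn.
have split_deg v : deg e v =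
    \sum_(u : 'I_n) ((u < v) && e u v : nat) + \sum_(u : 'I_n) ((v < u) && e v u : nat).
  rewrite deg_sum -big_split; apply: eq_bigr => u _ /=.
  rewrite [e v u]e_sym; case: ltngtP => //= [|/val_inj ->]; first by rewrite addn0.
  by rewrite e_irr.
rewrite (eq_bigr _ (fun v _ => split_deg v)) big_split exchange_big.
by congr (_ + _).
Qed.

Lemma num_edges_compl e : num_edges e + num_edges (compl e) = 'C(n, 2).
Proof.
rewrite /num_edges (card_rel (fun u v => (u < v) && e u v)).
rewrite (card_rel (fun u v => (u < v) && compl e u v)) -big_split /=.
rewrite (eq_bigr (fun u => \sum_(v : 'I_n) (u < v : nat))) => [|u _]; last first.
  rewrite -big_split; apply: eq_bigr => v _ /=; rewrite /compl.
  case: ltngtP => //= lt_uv.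
  by rewrite -val_eqE (ltn_eqF lt_uv); case: (e u v).
rewrite exchange_big /= -bin2_sum big_mkord; apply: eq_bigr => v _.
rewrite -big_mkcond /= -(big_ord_widen_cond _ predT (fun _ => 1) (ltnW (ltn_ord v))).
by rewrite sum1_card card_ord.
Qed.

Lemma deg1_adjE e a z : deg e a = 1 -> e z a -> forall u, e u a = (u == z).
Proof.
move=> /eqP/card1P[y nbhd_a] e_za u.
by move: (nbhd_a u) (nbhd_a z); rewrite !inE e_za => -> /esym/eqP ->.
Qed.

Lemma sparse_matching_or_twins e : simple_graph e -> ~~ odd n ->
  2 * num_edges e <= n ->
  (forall v, deg e v = 1) \/ exists a b, a != b /\ forall u, e u a = e u b.
Proof.
move=> e_simple n_even sparse; have [e_sym e_irr] := e_simple.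
have sum_deg := handshake e_simple; set d := deg e in sum_deg *.
set i := #|[pred v | d v == 0]|.
have excess : 2 * num_edges e + i = n + \sum_v (d v).-1.
  rewrite -sum_deg sum_nat_pos_pred addnAC; congr (_ + _).
  rewrite -[RHS](card_ord n) -(cardC [pred v | 0 < d v]); congr (_ + _).
  by apply: eq_card => v; rewrite !inE lt0n negbK.
have isolated v : d v = 0 -> forall u, e u v = false.
  by move/card0_eq => nbhd0 u; have := nbhd0 u; rewrite inE.
have [/card_gt1P[a [b [/[!inE]/eqP a0 /eqP b0 neq_ab]]] | i_le1] := ltnP 1 i.
  by right; exists a, b; split=> // u; rewrite isolated ?isolated.
have [i0 | i1] : i = 0 \/ i = 1 by lia.
  left=> v; have /eqP/[!sum_nat_eq0]/forall_inP/(_ v isT)/eqP : \sum_v (d v).-1 = 0 by lia.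
  by have /card0_eq/(_ v) := i0; rewrite !inE; lia.
(* A single isolated vertex: by parity the excess is exactly 1, so there is one
   vertex z of degree 2 and its two neighbours are leaves. *)
have /eqP/sum_nat_eq1[z [_ dz2 others]] : \sum_v (d v).-1 = 1 by move: n_even; lia.
have /card_gt1P[a [b [/[!inE] e_az e_bz neq_ab]]] : 1 < d z by lia.
right; exists a, b; split=> // u.
have leaf c : e c z -> forall u, e u c = (u == z).
  move=> e_cz; have c_neq_z : c != z by apply: contraTneq e_cz => ->; rewrite e_irr.
  have dc_gt0 : 0 < d c by apply/card_gt0P; exists z; rewrite inE e_sym.
  have dc1 : d c = 1 by have := others c c_neq_z isT; lia.
  by apply: deg1_adjE dc1 _; rewrite e_sym.
by rewrite (leaf a) ?(leaf b).
Qed.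

End GraphCounting.

Section LightsOut.

Variables n l : nat.
Implicit Types (e : rel 'I_n) (u v : 'I_n).

Lemma twins_not_NAW e a b : 1 < l -> a != b ->
  (forall u, ((u == a) || e u a) = ((u == b) || e u b)) -> ~ N_AW l e.
Proof.
move=> l_gt1 neq_ab twins NAW.
have [x solves] := NAW (fun v => (v == a) : nat).
have /eqP := solves a; rewrite eqxx (eq_bigl _ _ twins) -/(dvdn _ _).
have /eqP := solves b; rewrite [b == a]eq_sym (negbTE neq_ab) add0n -/(dvdn _ _).
move=> dvd_sum; rewrite (dvdn_addl 1 dvd_sum) dvdn1 => /eqP l_eq1.
by rewrite l_eq1 in l_gt1.
Qed.

Lemma NAW_regular_gcd_dvdn e k : symmetric e ->
  (forall v, #|[pred u | (u == v) || e u v]| = k) -> N_AW l e -> gcdn k l %| n.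
Proof.
move=> e_sym nbhd_k NAW; have [x solves] := NAW (fun _ => 1).
have double_count : \sum_v \sum_(u | (u == v) || e u v) x u = k * \sum_u x u.
  under eq_bigr do rewrite big_mkcond.
  rewrite exchange_big big_distrr /=; apply: eq_bigr => u _.
  rewrite -big_mkcond sum_nat_const -(nbhd_k u); congr (_ * _).
  by apply: eq_card => v; rewrite !inE eq_sym e_sym.
have l_dvd : l %| n + k * \sum_u x u.
  rewrite -double_count -[n in n + _]card_ord -sum1_card -big_split.
  by apply: dvdn_sum => v _; apply/eqP.
rewrite -(dvdn_addl n (dvdn_mulr (\sum_u x u) (dvdn_gcdl k l))).
exact: dvdn_trans (dvdn_gcdr k l) l_dvd.
Qed.

Lemma NAW_num_edges_compl_gt e : 0 < n -> ~~ odd n -> 1 < l -> gcdn n.-1 l != 1 ->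
  simple_graph e -> N_AW l e -> n./2 < num_edges (compl e).
Proof.
move=> n_gt0 n_even l_gt1 gcd_neq1 e_simple NAW; rewrite ltnNge; apply/negP => sparse.
have [|matching | [a [b [neq_ab twins]]]] :=
  sparse_matching_or_twins (compl_simple e_simple) n_even.
- by move: n_even; lia.
- have nbhd v : #|[pred u | (u == v) || e u v]| = n.-1.
    by have := card_closed_nbhd e v; rewrite matching; lia.
  have gcd_dvd_n := NAW_regular_gcd_dvdn e_simple.1 nbhd NAW.
  have : gcdn n.-1 l %| n - n.-1 by rewrite dvdn_sub ?dvdn_gcdl.
  by rewrite (_ : n - n.-1 = 1) ?dvdn1 ?(negbTE gcd_neq1) //; lia.
- by apply: (twins_not_NAW l_gt1 neq_ab) NAW => u; rewrite !closed_nbhdE twins.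
Qed.

End LightsOut.

Lemma card_ord_lt n m : m <= n -> #|[pred i : 'I_n | i < m]| = m.
Proof.
move=> le_mn; have widen_inj : injective (widen_ord le_mn).
  by move=> i j /(congr1 val) => /= /val_inj.
rewrite -[RHS]card_ord -(card_image widen_inj); apply: eq_card => i.
rewrite inE; apply/idP/imageP => [lt_im | [j _ ->] /=]; last exact: ltn_ord.
by exists (Ordinal lt_im) => //; apply: val_inj.
Qed.

Section ExtremalGraph.

Variable n : nat.
Implicit Types u v : 'I_n.

Lemma H_simple : simple_graph (@H_graph n).
Proof.
split=> [u v | u]; last by rewrite /H_graph eqxx.
rewrite /H_graph eq_sym; congr (_ && _).
by rewrite andbC; congr (_ || _); lia.
Qed.

Lemma H_triangle u v : v < 3 -> H_graph u v = (u < 3) && (u != v).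
Proof.
move=> lt_v3; rewrite /H_graph lt_v3 andbT andbC; congr (_ && _).
by rewrite orb_idr // => /and5P[]; lia.
Qed.

Lemma H_isolated u v : 3 < n -> v = n.-1 :> nat -> H_graph u v = false.
Proof. by move=> n_gt3 v_last; rewrite /H_graph -val_eqE; apply/negbTE; lia. Qed.

Lemma H_matched v : ~~ odd n -> 3 <= v < n.-1 ->
  exists2 p : 'I_n, 3 <= p < n.-1 & forall u, H_graph u v = (u == p).
Proof.
move=> n_even v_mid; pose p := if odd v then v.+1 else v.-1.
have p_spec : odd v /\ p = v.+1 \/ ~~ odd v /\ p = v.-1.
  by rewrite /p; case: odd; [left | right].
clearbody p.
have lt_pn : p < n by lia.
exists (Ordinal lt_pn) => [/=|u]; first by lia.
rewrite /H_graph -!val_eqE /=; apply/idP/eqP => [|->].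
  by case/andP => /eqP neq_uv /orP[/andP[_ lt_v3] | /and5P[_ _ _ _ /eqP half_eq]]; lia.
by apply/andP; split; [lia | apply/orP; right; apply/and5P; split; lia].
Qed.

Lemma deg_H v : 4 <= n -> ~~ odd n -> deg (@H_graph n) v = (v < 3) + (v < n.-1).
Proof.
move=> n_ge4 n_even.
have [lt_v3 | ge_v3] := ltnP v 3.
  rewrite (_ : v < n.-1) /=; last by lia.
  have := cardD1 v [pred u : 'I_n | u < 3]; rewrite card_ord_lt; last by lia.
  rewrite inE lt_v3 add1n => -[->].
  by apply: eq_card => u; rewrite !inE H_triangle // andbC.
have [lt_vm | ge_vm] := ltnP v n.-1.
  have /(H_matched n_even)[p _ nbhd_v] : 3 <= v < n.-1 by rewrite ge_v3.
  by rewrite /= -(card1 p); apply: eq_card => u; rewrite !inE nbhd_v.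
by apply: eq_card0 => u; rewrite !inE H_isolated //; have := ltn_ord v; lia.
Qed.

Lemma num_edges_H : 4 <= n -> ~~ odd n -> num_edges (@H_graph n) = n./2 + 1.
Proof.
move=> n_ge4 n_even.
have := handshake H_simple.
rewrite (eq_bigr _ (fun v _ => deg_H v n_ge4 n_even)) big_split /=.
have sum_lt m : m <= n -> \sum_(v : 'I_n) (v < m : nat) = m.
  move=> le_mn; rewrite -[RHS](card_ord_lt le_mn) -sum1_card [in RHS]big_mkcond.
  by apply: eq_bigr => v _; rewrite inE.
by rewrite !sum_lt //; [move: n_even; lia | lia | lia].
Qed.

End ExtremalGraph.

Section ZpSystems.
Import GRing.Theory.
Local Open Scope ring_scope.

Lemma Zp_solvable_NAW n l (e : rel 'I_n) : (1 < l)%N ->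
  (forall b : 'I_n -> 'Z_l, exists x : 'I_n -> 'Z_l,
     forall v, b v + \sum_(u | (u == v) || e u v) x u = 0) -> N_AW l e.
Proof.
move=> l_gt1 solvable b; have [x solves] := solvable (fun v => (b v)%:R).
exists (fun u => val (x u)) => v.
rewrite -(val_Zp_nat l_gt1) natrD natr_sum.
by under eq_bigr do rewrite natr_Zp; rewrite solves.
Qed.

Lemma sum_closed_nbhd_compl (V : zmodType) n (h : rel 'I_n) (x : 'I_n -> V) v :
  irreflexive h ->
  \sum_(u | (u == v) || compl h u v) x u = \sum_u x u - \sum_(u | h u v) x u.
Proof.
move=> h_irr; rewrite [\sum_u x u](bigID (h^~ v)) /= addrC addrK.
by apply: eq_bigl => u; rewrite /compl; case: eqP => [->|] //=; rewrite h_irr.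
Qed.

Section ComplementHSolution.

Variables n l : nat.
Hypotheses (n_ge4 : (4 <= n)%N) (n_even : ~~ odd n) (l_gt1 : (1 < l)%N) (l_odd : odd l).
Variables (w : 'I_n) (b : 'I_n -> 'Z_l).
Hypothesis w_last : w = n.-1 :> nat.

Let half : 'Z_l := ((l.+1)./2)%:R.
Let S := - b w.
Let T := half * (S *+ 3 + \sum_(u : 'I_n | (u < 3)%N) b u).
Let xm (u : 'I_n) := S + \sum_(y | H_graph y u) b y.
Let M := \sum_(u : 'I_n | (3 <= u < n.-1)%N) xm u.

(* With X the sum of all toggles, the system for the complement of H reads
   \sum_(u | H u v) x u = b v + X. The isolated vertex w forces X = S; a matched
   vertex gets S plus the label of its partner; on the triangle x v = T - S - b v,
   where the triangle sum T must satisfy 2 T = 3 S + \sum_(u < 3) b u; finally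
   x w is chosen so that X = S indeed. *)
Definition compl_H_sol (u : 'I_n) :=
  if (u < 3)%N then T - S - b u else if (u < n.-1)%N then xm u else S - T - M.

Lemma half_twice : half *+ 2 = 1.
Proof.
rewrite -mulrnA (_ : ((l.+1)./2 * 2 = l + 1)%N); last by lia.
by rewrite natrD pchar_Zp // add0r.
Qed.

Lemma sum_compl_H_sol_triangle : \sum_(u : 'I_n | (u < 3)%N) compl_H_sol u = T.
Proof.
rewrite (eq_bigr (fun u => T - S - b u)) => [|u lt_u3]; last by rewrite /compl_H_sol lt_u3.
rewrite sumrB sumr_const card_ord_lt; last by lia.
have twice_T : T *+ 2 = S *+ 3 + \sum_(u : 'I_n | (u < 3)%N) b u.
  by rewrite /T -mulrnAl half_twice mul1r.
have -> : \sum_(u : 'I_n | (u < 3)%N) b u = T *+ 2 - S *+ 3.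
  by rewrite twice_T addrAC subrr add0r.
by ring.
Qed.

Lemma sum_compl_H_sol : \sum_u compl_H_sol u = S.
Proof.
rewrite (bigID (fun u : 'I_n => (u < 3)%N)) /= sum_compl_H_sol_triangle.
rewrite (bigID (fun u : 'I_n => (u < n.-1)%N)) /=.
rewrite (eq_bigr xm) => [|u /andP[/negbTE ge_u3 lt_um]]; last by rewrite /compl_H_sol ge_u3 lt_um.
rewrite (eq_bigl (fun u : 'I_n => (3 <= u < n.-1)%N)) => [|u]; last by rewrite -leqNgt.
rewrite [X in _ + (_ + X)](big_pred1 w) => [|u]; last first.
  by rewrite /= -val_eqE /= -!leqNgt; apply/andP/eqP; have := ltn_ord u; lia.
by rewrite /compl_H_sol /= !ifF -/M; [ring | lia | lia].
Qed.

Lemma compl_H_sol_solves v :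
  b v + (\sum_u compl_H_sol u - \sum_(u | H_graph u v) compl_H_sol u) = 0.
Proof.
rewrite sum_compl_H_sol.
have [lt_v3 | ge_v3] := ltnP v 3.
  rewrite (eq_bigl (fun u : 'I_n => (u < 3)%N && (u != v))) => [|u]; last first.
    by rewrite H_triangle.
  have := sum_compl_H_sol_triangle; rewrite (bigD1 v) //= => sum_T.
  have -> : \sum_(u : 'I_n | (u < 3)%N && (u != v)) compl_H_sol u = T - compl_H_sol v.
    by rewrite -sum_T addrC addrK.
  by rewrite /compl_H_sol lt_v3; ring.
have [lt_vm | ge_vm] := ltnP v n.-1.
  have /(H_matched n_even)[p p_mid nbhd_v] : (3 <= v < n.-1)%N by rewrite ge_v3.
  have /(H_matched n_even)[q _ nbhd_p] := p_mid.
  have q_v : q = v by apply/eqP; rewrite eq_sym -nbhd_p (proj1 (H_simple n)) nbhd_v.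
  rewrite (big_pred1 p) // /compl_H_sol ifF; last by lia.
  rewrite ifT; last by lia.
  by rewrite /xm (big_pred1 v) => [|y]; [ring | rewrite nbhd_p q_v].
rewrite big_pred0 => [|u]; last by rewrite H_isolated //; have := ltn_ord v; lia.
have -> : v = w by apply: val_inj => /=; have := ltn_ord v; lia.
by rewrite /S; ring.
Qed.

End ComplementHSolution.

End ZpSystems.

Lemma G_graph_NAW n l : 4 <= n -> ~~ odd n -> 1 < l -> odd l -> N_AW l (@G_graph n).
Proof.
move=> n_ge4 n_even l_gt1 l_odd; change (N_AW l (compl (@H_graph n))).
apply: Zp_solvable_NAW => // b; have last_lt : n.-1 < n by lia.
exists (compl_H_sol (Ordinal last_lt) b) => v.
by rewrite sum_closed_nbhd_compl ?compl_H_sol_solves //; case: (H_simple n).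
Qed.

Theorem proposition4p4 (n l : nat) :
  4 <= n -> ~~ odd n -> 3 <= l -> odd l -> gcdn n.-1 l != 1 ->
  is_max_NAW n l ('C(n, 2) - (n./2 + 1)) /\ extremal l (@G_graph n).
Proof.
move=> n_ge4 n_even l_ge3 l_odd gcd_neq1.
have [n_gt0 l_gt1] : 0 < n /\ 1 < l by lia.
have G_simple : simple_graph (@G_graph n) := compl_simple (H_simple n).
have G_NAW := G_graph_NAW n_ge4 n_even l_gt1 l_odd.
have num_edges_G : num_edges (@G_graph n) = 'C(n, 2) - (n./2 + 1).
  change (num_edges (compl (@H_graph n)) = 'C(n, 2) - (n./2 + 1)).
  by have := num_edges_compl (@H_graph n); rewrite num_edges_H //; lia.
have bound (e : rel 'I_n) :
    simple_graph e -> N_AW l e -> num_edges e <= 'C(n, 2) - (n./2 + 1).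
  move=> e_simple e_NAW; have := num_edges_compl e.
  by have := NAW_num_edges_compl_gt n_gt0 n_even l_gt1 gcd_neq1 e_simple e_NAW; lia.
split; first by split=> //; exists (@G_graph n).
by split=> // e' e'_simple e'_NAW; rewrite num_edges_G; apply: bound.
Qed.
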